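(* Let $n\ge 2$ and let the billiard domain $\mathcal{B}\subset\mathbb{R}^n$ be the region between two parallel affine hyperplanes. Then every trajectory of the no-slip billiard in $\mathcal{B}$ whose initial center-of-mass velocity is not parallel to the hyperplanes is bounded (the position of the particle's center of mass remains in a bounded set). Trajectories remain bounded if a constant force is applied to the particle's center of mass along any direction parallel to the hyperplanes.
   Context: The moving particle is a ball of radius $r>0$ with a rotationally symmetric mass distribution of total mass $m$ whose second-moment matrix per unit mass is $\lambda I$, $\lambda=(r\gamma)^2/2$, $\gamma>0$. Put $c=\frac{1-\gamma^2}{1+\gamma^2}$, $s=\frac{2\gamma}{1+\gamma^2}$, and for $a,b\in\mathbb{R}^n$ let $a\wedge b\in\mathfrak{so}(n)$ be $(a\wedge b)x=(a\cdot x)b-(b\cdot x)a$. The billiard domain $\mathcal{B}$ is the set of admissible positions of the particle's center; at a boundary point $a$, $\nu_a$ is the unit normal pointing into $\mathcal{B}$. A state is $(a,u,U)$ with $u$ the center-of-mass velocity and $U\in\mathfrak{so}(n)$ the angular velocity matrix (a material point at $x$ has velocity $U(x-a)+u$). A no-slip billiard trajectory: between collisions $U$ is constant and the center of mass moves freely (or with constant acceleration $F/m$ under a constant force $F$); at a collision at $a$ the pre-collision $(u,U)$ is replaced by $C_a(u,U)=\big(cu-\tfrac{s}{\gamma}(u\cdot\nu_a)\nu_a+s\gamma rU\nu_a,\ \tfrac{s}{\gamma r}\nu_a\wedge u+U-\tfrac{s}{\gamma}\nu_a\wedge U\nu_a\big)$. *)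

From HB Require Import structures.
From mathcomp Require Import all_boot all_order all_algebra.
From mathcomp Require Import reals.
Set Implicit Arguments.
Unset Strict Implicit.
Unset Printing Implicit Defensive.
Import Order.TTheory GRing.Theory Num.Theory.
Local Open Scope ring_scope.

Definition vdot (R : nzRingType) (n : nat) (a b : 'cV[R]_n) : R :=
  \sum_(i < n) a i 0 * b i 0.

(* (a /\ b) x = (a . x) b - (b . x) a,  i.e.  a /\ b = b a^T - a b^T *)
Definition wedge (R : nzRingType) (n : nat) (a b : 'cV[R]_n) : 'M[R]_n :=
  b *m a^T - a *m b^T.

Definition skew (R : nzRingType) (n : nat) (U : 'M[R]_n) : Prop := U^T = - U.

Definition cfac (R : fieldType) (g : R) : R := (1 - g ^+ 2) / (1 + g ^+ 2).
Definition sfac (R : fieldType) (g : R) : R := (2 * g) / (1 + g ^+ 2).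

(* The no-slip collision map C_a(u,U), with nu = nu_a the inward unit normal *)
Definition coll_u (R : fieldType) (n : nat) (r g : R) (nu u : 'cV[R]_n)
  (U : 'M[R]_n) : 'cV[R]_n :=
  cfac g *: u - (sfac g / g * vdot u nu) *: nu + (sfac g * g * r) *: (U *m nu).

Definition coll_U (R : fieldType) (n : nat) (r g : R) (nu u : 'cV[R]_n)
  (U : 'M[R]_n) : 'M[R]_n :=
  (sfac g / (g * r)) *: wedge nu u + U - (sfac g / g) *: wedge nu (U *m nu).

(* A (forward) no-slip billiard trajectory, for t >= 0, in a domain with
   admissible-position predicate inB, boundary predicate bd and inward unit
   normal field nu, under constant force F on the center of mass.
   tau 0 = 0 is the initial time, tau (k+1) is the (k+1)-st collision time;
   on [tau k, tau (k+1)) the motion is free (constant acceleration F/m,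
   constant U); at tau (k+1) the center is on the boundary and the
   pre-collision velocities are replaced by their image under C. *)
Definition noslip_traj (R : realType) (n : nat) (r g m : R) (F : 'cV[R]_n)
  (inB bd : 'cV[R]_n -> Prop) (nu : 'cV[R]_n -> 'cV[R]_n)
  (a u : R -> 'cV[R]_n) (U : R -> 'M[R]_n) (tau : nat -> R) : Prop :=
  [/\ tau 0%N = 0,
      (forall k, tau k < tau k.+1),
      (forall t, 0 <= t -> exists k, tau k <= t < tau k.+1),
      (forall t, 0 <= t -> inB (a t)) &
      skew (U 0)] /\ 
      (forall k t, tau k <= t < tau k.+1 ->
         [/\ U t = U (tau k),
             u t = u (tau k) + ((t - tau k) / m) *: F &
             a t = a (tau k) + (t - tau k) *: u (tau k)
                   + ((t - tau k) ^+ 2 / (2 * m)) *: F]) /\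
      (forall k,
         let dt := tau k.+1 - tau k in
         let p := a (tau k) + dt *: u (tau k) + (dt ^+ 2 / (2 * m)) *: F in
         let v := u (tau k) + (dt / m) *: F in
         [/\ a (tau k.+1) = p, bd p,
             u (tau k.+1) = coll_u r g (nu p) v (U (tau k)) &
             U (tau k.+1) = coll_U r g (nu p) v (U (tau k))]).

Definition slab (R : realType) (n : nat) (e : 'cV[R]_n) (al be : R)
  (x : 'cV[R]_n) : Prop := al <= vdot x e <= be.

Definition slab_bd (R : realType) (n : nat) (e : 'cV[R]_n) (al be : R)
  (x : 'cV[R]_n) : Prop := vdot x e = al \/ vdot x e = be.

Definition slab_normal (R : realType) (n : nat) (e : 'cV[R]_n) (al be : R)
  (x : 'cV[R]_n) : 'cV[R]_n := if vdot x e == al then e else - e.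

From Pilot Require Import Defs.
From HB Require Import structures.
From mathcomp Require Import all_boot all_order all_algebra.
From mathcomp Require Import reals.
From mathcomp Require Import ring lra.
Import Order.TTheory GRing.Theory Num.Theory.
Local Open Scope ring_scope.
Set Implicit Arguments.
Unset Strict Implicit.
Unset Printing Implicit Defensive.

(* The normal velocity only changes sign at a collision and the force is
   tangential, so after the first collision the particle bounces between the
   two walls with constant flight time T.  From one collision to the next, the
   tangential velocity p and the spin term z = g r U nu (nu the normal of the
   upcoming collision) are shifted by ((T/m) F, 0) and then rotated by the
   angle with cosine cfac g and sine sfac g.  Centred at the fixed point of
   this affine map they just rotate, so they stay bounded, and the tangential
   position x keeps x + (T/2) A + (T/(2g)) B constant, where (A, B) is the
   recentred pair.  So the state is bounded at the collision times, hence
   along the free flights between them. *)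

Section InnerProduct.
Variables (R : comNzRingType) (n : nat).
Implicit Types (x y z nu : 'cV[R]_n) (k : R).

Lemma vdotC x y : vdot x y = vdot y x.
Proof. by apply: eq_bigr => i _; rewrite mulrC. Qed.

Lemma vdotDl x y z : vdot (x + y) z = vdot x z + vdot y z.
Proof. by rewrite /vdot -big_split; apply: eq_bigr => i _; rewrite !mxE mulrDl. Qed.

Lemma vdotZl k x y : vdot (k *: x) y = k * vdot x y.
Proof. by rewrite /vdot mulr_sumr; apply: eq_bigr => i _; rewrite !mxE mulrA. Qed.

Lemma vdotNl x y : vdot (- x) y = - vdot x y.
Proof. by rewrite -scaleN1r vdotZl mulN1r. Qed.

Lemma vdotDr x y z : vdot x (y + z) = vdot x y + vdot x z.
Proof. by rewrite !(vdotC x) vdotDl. Qed.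

Lemma vdotZr k x y : vdot x (k *: y) = k * vdot x y.
Proof. by rewrite !(vdotC x) vdotZl. Qed.

Lemma vdotNr x y : vdot x (- y) = - vdot x y.
Proof. by rewrite !(vdotC x) vdotNl. Qed.

Lemma vdot_mulmx x y : x^T *m y = (vdot x y)%:M.
Proof.
rewrite [LHS]mx11_scalar; congr (_%:M).
by rewrite !mxE; apply: eq_bigr => i _; rewrite !mxE.
Qed.

Lemma wedge_mulmx x y z : wedge x y *m z = vdot x z *: y - vdot y z *: x.
Proof. by rewrite /wedge mulmxBl -!mulmxA !vdot_mulmx !mul_mx_scalar. Qed.

Lemma vdot_rot (c s : R) x y : c ^+ 2 + s ^+ 2 = 1 ->
  vdot (c *: x + s *: y) (c *: x + s *: y) + vdot (- s *: x + c *: y) (- s *: x + c *: y)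
  = vdot x x + vdot y y.
Proof.
move=> cs1; rewrite !vdotDl !vdotDr !vdotZl !vdotZr (vdotC y x).
transitivity ((c ^+ 2 + s ^+ 2) * (vdot x x + vdot y y)); first by ring.
by rewrite cs1 mul1r.
Qed.

Definition tproj nu x := x - vdot x nu *: nu.

Lemma tprojD nu x y : tproj nu (x + y) = tproj nu x + tproj nu y.
Proof. by rewrite /tproj vdotDl scalerDl opprD addrACA. Qed.

Lemma tprojZ nu k x : tproj nu (k *: x) = k *: tproj nu x.
Proof. by rewrite /tproj vdotZl scalerBr scalerA. Qed.

Lemma tprojN nu x : tproj nu (- x) = - tproj nu x.
Proof. by rewrite -scaleN1r tprojZ scaleN1r. Qed.

Lemma tproj_id nu x : vdot x nu = 0 -> tproj nu x = x.
Proof. by rewrite /tproj => ->; rewrite scale0r subr0. Qed.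

Lemma tproj_unit nu : vdot nu nu = 1 -> tproj nu nu = 0.
Proof. by rewrite /tproj => ->; rewrite scale1r subrr. Qed.

Lemma tprojNnormal nu x : tproj (- nu) x = tproj nu x.
Proof. by rewrite /tproj vdotNr scalerN scaleNr opprK. Qed.

Lemma tproj_decomp nu x : x = tproj nu x + vdot x nu *: nu.
Proof. by rewrite subrK. Qed.

End InnerProduct.

(* [Defs.skew] is qualified because MathComp's [skew] notation shadows it. *)
Section SkewMatrices.
Variables (R : comNzRingType) (n : nat).
Implicit Types (A B : 'M[R]_n) (x y : 'cV[R]_n).

Lemma skewD A B : Defs.skew A -> Defs.skew B -> Defs.skew (A + B).
Proof. by rewrite /Defs.skew => skewA skewB; rewrite linearD /= skewA skewB opprD. Qed.

Lemma skewN A : Defs.skew A -> Defs.skew (- A).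
Proof. by rewrite /Defs.skew => skewA; rewrite linearN /= skewA. Qed.

Lemma skewZ k A : Defs.skew A -> Defs.skew (k *: A).
Proof. by rewrite /Defs.skew => skewA; rewrite linearZ /= skewA scalerN. Qed.

Lemma skew_wedge x y : Defs.skew (wedge x y).
Proof. by rewrite /Defs.skew /wedge linearB /= !trmx_mul !trmxK opprB. Qed.

End SkewMatrices.

Lemma skew_vdot (R : numDomainType) n (V : 'M[R]_n) (x : 'cV[R]_n) :
  Defs.skew V -> vdot x (V *m x) = 0.
Proof.
move=> skewV; set q := vdot x (V *m x).
have : q%:M = - q%:M :> 'M_1.
  by rewrite -[LHS]tr_scalar_mx -vdot_mulmx !trmx_mul trmxK skewV mulmxN mulmxA mulNmx.
move/matrixP/(_ 0 0); rewrite !mxE /= mulr1n => /eqP.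
by rewrite -addr_eq0 -mulr2n mulrn_eq0 => /eqP.
Qed.

Section CollisionMap.
Variable R : realFieldType.

Lemma sqr_add1_neq0 (g : R) : 1 + g ^+ 2 != 0.
Proof. by apply: lt0r_neq0; have := sqr_ge0 g; lra. Qed.

Lemma cfac_sfac_sqr (g : R) : cfac g ^+ 2 + sfac g ^+ 2 = 1.
Proof. by rewrite /cfac /sfac; field; rewrite sqr_add1_neq0. Qed.

Lemma cfac_sub_sfac (g : R) : g != 0 -> cfac g - sfac g / g = -1.
Proof. by move=> g_neq0; rewrite /cfac /sfac; field; rewrite sqr_add1_neq0 g_neq0. Qed.

Variables (n : nat) (r g : R) (nu v : 'cV[R]_n) (U : 'M[R]_n).
Hypotheses (g_neq0 : g != 0) (nu_unit : vdot nu nu = 1) (U_skew : Defs.skew U).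

Lemma skew_coll_U : Defs.skew (coll_U r g nu v U).
Proof.
exact: skewD (skewD (skewZ _ (skew_wedge _ _)) U_skew) (skewN (skewZ _ (skew_wedge _ _))).
Qed.

Let Unu_normal : vdot (U *m nu) nu = 0.
Proof. by rewrite vdotC skew_vdot. Qed.

Lemma coll_u_normal : vdot (coll_u r g nu v U) nu = - vdot v nu.
Proof.
rewrite /coll_u !vdotDl vdotNl !vdotZl nu_unit Unu_normal mulr1 mulr0 addr0.
by rewrite -mulrBl cfac_sub_sfac // mulN1r.
Qed.

Lemma tproj_coll_u :
  tproj nu (coll_u r g nu v U) = cfac g *: tproj nu v + (sfac g * g * r) *: (U *m nu).
Proof.
rewrite /coll_u !tprojD tprojN !tprojZ tproj_unit // (tproj_id Unu_normal).
by rewrite scaler0 oppr0 addr0.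
Qed.

Lemma coll_U_normal :
  coll_U r g nu v U *m nu = (sfac g / (g * r)) *: tproj nu v - cfac g *: (U *m nu).
Proof.
rewrite /coll_U !mulmxDl mulNmx -!scalemxAl !wedge_mulmx nu_unit Unu_normal.
rewrite !scale1r scale0r subr0 -/(tproj nu v).
have c_eq : cfac g = sfac g / g - 1 by have := cfac_sub_sfac g_neq0; lra.
by apply/matrixP => i j; rewrite !mxE c_eq; ring.
Qed.

End CollisionMap.

Section SlabWalls.
Variables (R : realType) (n : nat) (e : 'cV[R]_n) (al be : R).

Lemma slab_normal_pm x : slab_normal e al be x = e \/ slab_normal e al be x = - e.
Proof. by rewrite /slab_normal; case: ifP => _; [left | right]. Qed.

Lemma slab_walls_opposite x y : al < be ->
  slab_bd e al be x -> slab_bd e al be y -> vdot x e != vdot y e ->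
  `|vdot y e - vdot x e| = be - al /\ slab_normal e al be y = - slab_normal e al be x.
Proof.
move=> al_lt_be; have [be_neq al_neq] := (gt_eqF al_lt_be, lt_eqF al_lt_be).
rewrite /slab_normal; case=> ->; case=> ->; rewrite ?eqxx ?be_neq ?al_neq // => _.
- by rewrite ger0_norm // subr_ge0 ltW.
- by rewrite distrC ger0_norm ?opprK // subr_ge0 ltW.
Qed.

End SlabWalls.

Section CoordinateBounds.
Variables (R : realDomainType) (n : nat).
Implicit Types (x y : 'cV[R]_n) (xs ys : nat -> 'cV[R]_n).

Definition cbound (K : R) x := forall i, `|x i 0| <= K.

Definition bounded_seq xs := exists K, forall k, cbound K (xs k).

Lemma cboundD K L x y : cbound K x -> cbound L y -> cbound (K + L) (x + y).
Proof. by move=> Kx Ly i; rewrite mxE (le_trans (ler_normD _ _)) ?lerD. Qed.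

Lemma cboundN K x : cbound K x -> cbound K (- x).
Proof. by move=> Kx i; rewrite mxE normrN. Qed.

Lemma cboundZ K L (k : R) x : `|k| <= L -> cbound K x -> cbound (L * K) (k *: x).
Proof. by move=> kL Kx i; rewrite mxE normrM ler_pM. Qed.

Lemma vdot_ge0 x : 0 <= vdot x x.
Proof. by apply: sumr_ge0 => i _; rewrite -expr2 sqr_ge0. Qed.

Lemma coord_sqr_le_vdot x i : x i 0 ^+ 2 <= vdot x x.
Proof.
rewrite /vdot (bigD1 i) //= -expr2 lerDl.
by apply: sumr_ge0 => j _; rewrite -expr2 sqr_ge0.
Qed.

Lemma normr_le_add1_sqr (y : R) : `|y| <= 1 + y ^+ 2.
Proof. by rewrite -real_normK ?num_real //; have := normr_ge0 y; nra. Qed.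

Lemma cbound_vdot x : cbound (1 + vdot x x) x.
Proof. by move=> i; rewrite (le_trans (normr_le_add1_sqr _)) // lerD2l coord_sqr_le_vdot. Qed.

Lemma eq_bounded_seq xs ys : (forall k, xs k = ys k) -> bounded_seq ys -> bounded_seq xs.
Proof. by move=> xy [K Kys]; exists K => k; rewrite xy. Qed.

Lemma bounded_seq_cst x : bounded_seq (fun=> x).
Proof. by exists (1 + vdot x x) => _; apply: cbound_vdot. Qed.

Lemma bounded_seqD xs ys :
  bounded_seq xs -> bounded_seq ys -> bounded_seq (fun k => xs k + ys k).
Proof. by move=> [K Kxs] [L Lys]; exists (K + L) => k; apply: cboundD. Qed.

Lemma bounded_seqN xs : bounded_seq xs -> bounded_seq (fun k => - xs k).
Proof. by move=> [K Kxs]; exists K => k; apply: cboundN. Qed.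

Lemma bounded_seqZ (cs : nat -> R) L xs : (forall k, `|cs k| <= L) ->
  bounded_seq xs -> bounded_seq (fun k => cs k *: xs k).
Proof. by move=> csL [K Kxs]; exists (L * K) => k; apply: cboundZ. Qed.

Lemma bounded_seqZl (k : R) xs : bounded_seq xs -> bounded_seq (fun i => k *: xs i).
Proof. by apply: (bounded_seqZ (cs := fun=> k)) => i. Qed.

Lemma bounded_seq_vdot E xs : (forall k, vdot (xs k) (xs k) <= E) -> bounded_seq xs.
Proof.
move=> xsE; exists (1 + E) => k i.
by rewrite (le_trans (cbound_vdot _ i)) // lerD2l.
Qed.

Lemma bounded_seq_tail xs : bounded_seq (fun k => xs k.+1) -> bounded_seq xs.
Proof.
move=> [K Kxs]; exists (Num.max K (1 + vdot (xs 0) (xs 0))) => -[|k] i; rewrite le_max.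
  by rewrite cbound_vdot orbT.
by rewrite Kxs.
Qed.

Lemma bounded_seq_tproj nu xs : bounded_seq (fun k => tproj nu (xs k)) ->
  (exists L, forall k, `|vdot (xs k) nu| <= L) -> bounded_seq xs.
Proof.
move=> bnd_tproj [L bnd_nu]; apply: (eq_bounded_seq (fun k => tproj_decomp nu (xs k))).
by apply: bounded_seqD bnd_tproj _; apply: bounded_seqZ bnd_nu (bounded_seq_cst _).
Qed.

End CoordinateBounds.

Section SlabTrajectory.
Variables (R : realType) (n : nat) (r g m al be : R) (e F : 'cV[R]_n).
Variables (a u : R -> 'cV[R]_n) (U : R -> 'M[R]_n) (tau : nat -> R).
Hypotheses (r_gt0 : 0 < r) (g_gt0 : 0 < g) (m_gt0 : 0 < m).
Hypotheses (e_unit : vdot e e = 1) (al_lt_be : al < be) (F_tangent : vdot F e = 0).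
Hypothesis traj :
  noslip_traj r g m F (slab e al be) (slab_bd e al be) (slab_normal e al be) a u U tau.
Hypothesis w0_neq0 : vdot (u 0) e != 0.

Let g_neq0 : g != 0 := lt0r_neq0 g_gt0.
Let r_neq0 : r != 0 := lt0r_neq0 r_gt0.
Let m_neq0 : m != 0 := lt0r_neq0 m_gt0.

Let dt k := tau k.+1 - tau k.
Let nrm k := slab_normal e al be (a (tau k)).
Let vin k := u (tau k) + (dt k / m) *: F.
Let w0 := vdot (u 0) e.
Let T := (be - al) / `|w0|.

Lemma tau0 : tau 0 = 0.
Proof. by case: traj => -[]. Qed.

Lemma dt_gt0 k : 0 < dt k.
Proof. by case: traj => -[_ tau_lt _ _ _] _; rewrite subr_gt0. Qed.

Lemma tau_cover t : 0 <= t -> exists k, tau k <= t < tau k.+1.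
Proof. by case: traj => -[_ _ cover _ _] _; apply: cover. Qed.

Lemma flight k t : tau k <= t < tau k.+1 ->
  a t = a (tau k) + (t - tau k) *: u (tau k) + ((t - tau k) ^+ 2 / (2 * m)) *: F.
Proof. by case: traj => _ [/(_ k t) flow _] /flow []. Qed.

Lemma collision k :
  [/\ a (tau k.+1) = a (tau k) + dt k *: u (tau k) + (dt k ^+ 2 / (2 * m)) *: F,
      slab_bd e al be (a (tau k.+1)),
      u (tau k.+1) = coll_u r g (nrm k.+1) (vin k) (U (tau k)) &
      U (tau k.+1) = coll_U r g (nrm k.+1) (vin k) (U (tau k))].
Proof. by case: traj => _ [_ /(_ k) [ak bd uk Uk]]; rewrite /nrm ak. Qed.

Lemma nrm_pm k : nrm k = e \/ nrm k = - e.
Proof. exact: slab_normal_pm. Qed.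

Lemma nrm_unit k : vdot (nrm k) (nrm k) = 1.
Proof. by case: (nrm_pm k) => ->; rewrite ?vdotNl ?vdotNr ?opprK. Qed.

Lemma tproj_nrm k x : tproj (nrm k) x = tproj e x.
Proof. by case: (nrm_pm k) => ->; rewrite ?tprojNnormal. Qed.

Lemma skew_U k : Defs.skew (U (tau k)).
Proof.
elim: k => [|k skewUk]; first by rewrite tau0; case: traj => -[].
by have [_ _ _ ->] := collision k; apply: skew_coll_U.
Qed.

Lemma normal_velocity_flip k : vdot (u (tau k.+1)) e = - vdot (u (tau k)) e.
Proof.
have vin_e : vdot (vin k) e = vdot (u (tau k)) e.
  by rewrite vdotDl vdotZl F_tangent mulr0 addr0.
have [_ _ -> _] := collision k; rewrite -vin_e.
have := coll_u_normal r (vin k) g_neq0 (nrm_unit k.+1) (skew_U k).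
by case: (nrm_pm k.+1) => ->; rewrite ?vdotNr // => /oppr_inj.
Qed.

Lemma normal_velocity k : vdot (u (tau k)) e = (-1) ^+ k * w0.
Proof.
elim: k => [|k IHk]; first by rewrite tau0 mul1r.
by rewrite normal_velocity_flip IHk exprS mulN1r mulNr.
Qed.

Lemma normal_position k :
  vdot (a (tau k.+1)) e = vdot (a (tau k)) e + dt k * vdot (u (tau k)) e.
Proof.
have [-> _ _ _] := collision k.
by rewrite !vdotDl !vdotZl F_tangent mulr0 addr0.
Qed.

Lemma free_flight k : dt k.+1 = T /\ nrm k.+2 = - nrm k.+1.
Proof.
have [_ bd1 _ _] := collision k; have [_ bd2 _ _] := collision k.+1.
have dy : vdot (a (tau k.+2)) e - vdot (a (tau k.+1)) e = dt k.+1 * ((-1) ^+ k.+1 * w0).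
  by rewrite normal_position normal_velocity addrAC subrr add0r.
have dy_neq0 : dt k.+1 * ((-1) ^+ k.+1 * w0) != 0.
  by rewrite !mulf_eq0 signr_eq0 (negbTE w0_neq0) (gt_eqF (dt_gt0 _)).
have walls_neq : vdot (a (tau k.+1)) e != vdot (a (tau k.+2)) e.
  by rewrite eq_sym -subr_eq0 dy.
have [dist nrm_opp] := slab_walls_opposite al_lt_be bd1 bd2 walls_neq.
split=> //; move: dist; rewrite dy normrM normrM normrX normrN1 expr1n mul1r.
rewrite ger0_norm ?(ltW (dt_gt0 _)) // /T => <-.
by rewrite mulfK // normr_eq0.
Qed.

Let xt k := tproj e (a (tau k)).
Let pt k := tproj e (u (tau k)).
Let zt k := (g * r) *: (U (tau k) *m nrm k.+1).

Lemma tproj_vin k : tproj e (vin k) = pt k + (dt k / m) *: F.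
Proof. by rewrite tprojD tprojZ (tproj_id F_tangent). Qed.

Lemma tangential_position k :
  xt k.+1 = xt k + dt k *: pt k + (dt k ^+ 2 / (2 * m)) *: F.
Proof.
rewrite /xt; have [-> _ _ _] := collision k.
by rewrite !tprojD !tprojZ (tproj_id F_tangent).
Qed.

Lemma tangential_velocity k :
  pt k.+1 = cfac g *: (pt k + (dt k / m) *: F) + sfac g *: zt k.
Proof.
rewrite /pt; have [_ _ -> _] := collision k.
rewrite -(tproj_nrm k.+1) (tproj_coll_u r g (vin k) (nrm_unit k.+1) (skew_U k)).
by rewrite tproj_nrm tproj_vin /zt scalerA mulrA.
Qed.

Lemma spin_step k :
  zt k.+1 = - sfac g *: (pt k + (dt k / m) *: F) + cfac g *: zt k.
Proof.
rewrite /zt; have [_ nrm_opp] := free_flight k; have [_ _ _ ->] := collision k.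
rewrite nrm_opp mulmxN.
rewrite (coll_U_normal r (vin k) g_neq0 (nrm_unit k.+1) (skew_U k)) tproj_nrm tproj_vin.
by apply/matrixP => i j; rewrite !mxE; field; rewrite m_neq0 r_neq0 g_neq0.
Qed.

Let A k := pt k + (T / (2 * m)) *: F.
Let B k := zt k + (T / (2 * g * m)) *: F.
Let Q k := xt k + (T / 2) *: A k + (T / (2 * g)) *: B k.

Lemma rotation_step k :
  A k.+2 = cfac g *: A k.+1 + sfac g *: B k.+1 /\
  B k.+2 = - sfac g *: A k.+1 + cfac g *: B k.+1.
Proof.
have [dtT _] := free_flight k.
rewrite /A /B (tangential_velocity k.+1) (spin_step k.+1) dtT.
move: (pt k.+1) (zt k.+1) => p z; have gg_neq0 := sqr_add1_neq0 g.
by split; apply/matrixP => i j; rewrite !mxE /cfac /sfac; field; rewrite gg_neq0 m_neq0 g_neq0.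
Qed.

Lemma Q_step k : Q k.+2 = Q k.+1.
Proof.
have [dtT _] := free_flight k; have [A_step B_step] := rotation_step k.
rewrite /Q A_step B_step (tangential_position k.+1) dtT /A /B.
move: (xt k.+1) (pt k.+1) (zt k.+1) => x p z; have gg_neq0 := sqr_add1_neq0 g.
by apply/matrixP => i j; rewrite !mxE /cfac /sfac; field; rewrite gg_neq0 m_neq0 g_neq0.
Qed.

Lemma energy_const k :
  vdot (A k.+1) (A k.+1) + vdot (B k.+1) (B k.+1) = vdot (A 1) (A 1) + vdot (B 1) (B 1).
Proof.
elim: k => [|k <-] //; have [-> ->] := rotation_step k.
by rewrite vdot_rot // cfac_sfac_sqr.
Qed.

Lemma Q_const k : Q k.+1 = Q 1.
Proof. by elim: k => [|k IHk] //; rewrite Q_step. Qed.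

Lemma bounded_rotating_pair : bounded_seq (fun k => A k.+1) /\ bounded_seq (fun k => B k.+1).
Proof.
split; apply: (bounded_seq_vdot (E := vdot (A 1) (A 1) + vdot (B 1) (B 1))) => k;
  by rewrite -(energy_const k) ?lerDl ?lerDr vdot_ge0.
Qed.

Lemma bounded_positions : bounded_seq (fun k => a (tau k)).
Proof.
have [bndA bndB] := bounded_rotating_pair.
apply: bounded_seq_tail; apply: (bounded_seq_tproj (nu := e)).
  have xt_eq k : xt k.+1 = Q 1 - (T / 2) *: A k.+1 - (T / (2 * g)) *: B k.+1.
    by rewrite -(Q_const k) /Q addrAC !addrK.
  apply: (eq_bounded_seq xt_eq).
  exact: bounded_seqD (bounded_seqD (bounded_seq_cst _) (bounded_seqN (bounded_seqZl _ bndA)))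
                      (bounded_seqN (bounded_seqZl _ bndB)).
exists (`|al| + `|be|) => k; have [_ [] -> _ _] := collision k.
  by rewrite lerDl normr_ge0.
by rewrite lerDr normr_ge0.
Qed.

Lemma bounded_velocities : bounded_seq (fun k => u (tau k)).
Proof.
have [bndA _] := bounded_rotating_pair.
apply: bounded_seq_tail; apply: (bounded_seq_tproj (nu := e)).
  have pt_eq k : pt k.+1 = A k.+1 - (T / (2 * m)) *: F by rewrite /A addrK.
  exact: eq_bounded_seq pt_eq (bounded_seqD bndA (bounded_seq_cst _)).
exists `|w0| => k.
by rewrite normal_velocity normrM normrX normrN1 expr1n mul1r.
Qed.

Lemma T_gt0 : 0 < T.
Proof. by rewrite divr_gt0 ?normr_gt0 // subr_gt0. Qed.

Lemma trajectory_bounded : exists M, forall t, 0 <= t -> cbound M (a t).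
Proof.
have [Ka bnd_a] := bounded_positions; have [Ku bnd_u] := bounded_velocities.
pose D := tau 1 + T.
have dt_le k : dt k <= D.
  case: k => [|k]; first by rewrite /dt tau0 subr0 lerDl (ltW T_gt0).
  have [-> _] := free_flight k; rewrite lerDr.
  by have := dt_gt0 0; rewrite /dt tau0 subr0 => /ltW.
exists (Ka + D * Ku + (D ^+ 2 / (2 * m)) * (1 + vdot F F)) => t t_ge0.
have [k /andP[tk_le_t t_lt_tk1]] := tau_cover t_ge0.
have [s_ge0 s_le_D] : 0 <= t - tau k /\ t - tau k <= D.
  by split; [rewrite subr_ge0 | apply: le_trans (dt_le k); rewrite lerB // ltW].
rewrite (flight (k := k)) ?tk_le_t ?t_lt_tk1 //.
apply: cboundD (cboundD (bnd_a k) (cboundZ _ (bnd_u k))) (cboundZ _ (cbound_vdot F)).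
  by rewrite ger0_norm.
rewrite ger0_norm ?divr_ge0 ?sqr_ge0 ?mulr_ge0 ?(ltW m_gt0) //.
by rewrite ler_pM2r ?invr_gt0 ?mulr_gt0 // lerXn2r ?nnegrE // (le_trans s_ge0).
Qed.

End SlabTrajectory.

Theorem theorem2p7 (R : realType) (n : nat) (r g m al be : R)
  (e F : 'cV[R]_n) (a u : R -> 'cV[R]_n) (U : R -> 'M[R]_n) (tau : nat -> R) :
  (2 <= n)%N -> 0 < r -> 0 < g -> 0 < m ->
  vdot e e = 1 -> al < be ->
  vdot F e = 0 ->
  noslip_traj r g m F (slab e al be) (slab_bd e al be) (slab_normal e al be)
    a u U tau ->
  vdot (u 0) e != 0 ->
  exists M : R, forall t : R, 0 <= t -> forall i : 'I_n, `|a t i 0| <= M.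
Proof.
move=> _ r_gt0 g_gt0 m_gt0 e_unit al_lt_be F_tangent traj w0_neq0.
exact: trajectory_bounded r_gt0 g_gt0 m_gt0 e_unit al_lt_be F_tangent traj w0_neq0.
Qed.
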